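(* A set of observables $A^1,\dots,A^m$ on $\mathbb C^d$ is informationally complete for pure states if and only if the composite physical imposition operator has no bifurcations in its physical fixed points, i.e. if and only if the number of rays contained in $\Gamma_{A^1\cdots A^m\Phi}$ is the same for every unit vector (generator state) $\Phi\in\mathbb C^d$.
   Context: States are unit vectors of $\mathbb C^d$; each observable $A^j$ is non-degenerate, identified with its orthonormal eigenbasis $\{\varphi^j_k\}_{k=0}^{d-1}$. Informationally complete (for pure states): whenever unit $\Phi,\Psi$ satisfy $|\langle\varphi^j_k,\Phi\rangle|=|\langle\varphi^j_k,\Psi\rangle|$ for all $j,k$, then $\Psi=e^{i\alpha}\Phi$. Physical imposition operator: $T_{A\Phi}\Psi=\sum_{k}|\langle\varphi_k,\Phi\rangle|\,u_k(\Psi)\,\varphi_k$, with $u_k(\Psi)=\langle\varphi_k,\Psi\rangle/|\langle\varphi_k,\Psi\rangle|$ if nonzero and $1$ otherwise. $\Gamma_{A\Phi}=\{\Psi\text{ unit}:T_{A\Phi}\Psi=\Psi\}$, $\Gamma_{A^1\cdots A^m\Phi}=\bigcap_j\Gamma_{A^j\Phi}$ (a union of rays $\{e^{i\alpha}\Psi\}$); a bifurcation means a change of the number of such rays as the generator state $\Phi$ varies. *)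

(* The field of complex numbers is modelled by an arbitrary
   numClosedFieldType C (algebraically closed field with conjugation and norm). *)
From HB Require Import structures.
From mathcomp Require Import all_boot all_order all_algebra.
Set Implicit Arguments. Unset Strict Implicit. Unset Printing Implicit Defensive.
Import Order.TTheory GRing.Theory Num.Theory.
Local Open Scope ring_scope.

Section QDefs.
Variable C : numClosedFieldType.
Variable d : nat.

Definition inner (u v : 'cV[C]_d) : C := \sum_(i < d) (u i 0)^* * v i 0.

Definition unit_vec (v : 'cV[C]_d) : Prop := inner v v = 1.

(* an observable = its orthonormal eigenbasis phi_0 .. phi_{d-1} *)
Definition onbasis (phi : 'I_d -> 'cV[C]_d) : Prop :=
  forall k l : 'I_d, inner (phi k) (phi l) = (k == l)%:R.

Definition phase (z : C) : C := if z == 0 then 1 else z / `|z|.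

Definition impose (phi : 'I_d -> 'cV[C]_d) (Phi Psi : 'cV[C]_d) : 'cV[C]_d :=
  \sum_(k < d) (`|inner (phi k) Phi| * phase (inner (phi k) Psi)) *: phi k.

Definition Gamma (m : nat) (A : 'I_m -> 'I_d -> 'cV[C]_d) (Phi Psi : 'cV[C]_d) : Prop :=
  unit_vec Psi /\ forall j : 'I_m, impose (A j) Phi Psi = Psi.

Definition same_ray (Psi Psi' : 'cV[C]_d) : Prop :=
  exists c : C, `|c| = 1 /\ Psi' = c *: Psi.

Definition info_complete (m : nat) (A : 'I_m -> 'I_d -> 'cV[C]_d) : Prop :=
  forall Phi Psi : 'cV[C]_d, unit_vec Phi -> unit_vec Psi ->
    (forall (j : 'I_m) (k : 'I_d), `|inner (A j k) Phi| = `|inner (A j k) Psi|) ->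
    same_ray Phi Psi.

(* The sets of rays contained in S1 and S2 have the same cardinality:
   f induces a bijection between the ray-quotients of S1 and S2. *)
Definition same_num_rays (S1 S2 : 'cV[C]_d -> Prop) : Prop :=
  exists f : 'cV[C]_d -> 'cV[C]_d,
    (forall x, S1 x -> S2 (f x)) /\
    (forall x y, S1 x -> S1 y -> (same_ray x y <-> same_ray (f x) (f y))) /\
    (forall y, S2 y -> exists x, S1 x /\ same_ray (f x) y).

Definition no_bifurcation (m : nat) (A : 'I_m -> 'I_d -> 'cV[C]_d) : Prop :=
  forall Phi Phi' : 'cV[C]_d, unit_vec Phi -> unit_vec Phi' ->
    same_num_rays (Gamma A Phi) (Gamma A Phi').
End QDefs.

(* The key observation is that Psi is a fixed point of T_{A Phi} exactly when
   |<phi_k, Psi>| = |<phi_k, Phi>| for every eigenvector phi_k of A, so that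
   Gamma_{A^1...A^m Phi} is the set of unit vectors sharing all measurement
   moduli with Phi; in particular Phi itself always lies in it.  Hence the
   observables are informationally complete iff every Gamma_Phi consists of a
   single ray.  On the other hand, for Phi an eigenvector of one observable
   Gamma_Phi is always the single ray of Phi.  Since "having the same number
   of rays" as a one-ray set forces a set to have at most one ray, absence of
   bifurcations is also equivalent to every Gamma_Phi being one ray. *)
From HB Require Import structures.
From mathcomp Require Import all_boot all_order all_algebra.
Import Order.TTheory GRing.Theory Num.Theory.
Local Open Scope ring_scope.
Set Implicit Arguments. Unset Strict Implicit.

Section ImpositionOperator.
Variable C : numClosedFieldType.
Variable d : nat.
Implicit Types (phi : 'I_d -> 'cV[C]_d) (u v Phi Psi : 'cV[C]_d).

Lemma onbasis_expand phi : onbasis phi ->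
  forall v, v = \sum_(k < d) inner (phi k) v *: phi k.
Proof.
move=> hphi v.
pose M := \matrix_(i < d, k < d) phi k i 0.
pose N := \matrix_(k < d, i < d) (phi k i 0)^*.
have NM : N *m M = 1%:M.
  apply/matrixP => k l; rewrite !mxE -hphi /inner.
  by apply: eq_bigr => i _; rewrite !mxE.
have MN := mulmx1C NM.
apply/matrixP => i j; rewrite (ord1 j) {j}.
have := congr1 (fun X => (X *m v) i 0) MN.
rewrite mul1mx -mulmxA => <-.
rewrite summxE !mxE; apply: eq_bigr => k _.
rewrite !mxE mulrC /inner; congr (_ * _).
by apply: eq_bigr => l _; rewrite !mxE.
Qed.

Lemma inner_sum u (F : 'I_d -> C) (w : 'I_d -> 'cV[C]_d) :
  inner u (\sum_(k < d) F k *: w k) = \sum_(k < d) F k * inner u (w k).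
Proof.
rewrite /inner.
under eq_bigr => i _ do rewrite summxE mulr_sumr.
rewrite exchange_big /=; apply: eq_bigr => k _.
rewrite mulr_sumr; apply: eq_bigr => i _.
by rewrite mxE mulrCA.
Qed.

Lemma inner_onbasis_sum phi (F : 'I_d -> C) l : onbasis phi ->
  inner (phi l) (\sum_(k < d) F k *: phi k) = F l.
Proof.
move=> hphi; rewrite inner_sum (bigD1 l) //= hphi eqxx mulr1 big1 ?addr0 //.
by move=> k /negbTE kl; rewrite hphi eq_sym kl mulr0.
Qed.

Lemma norm_phase (z : C) : `|phase z| = 1.
Proof.
rewrite /phase; case: eqP => [_|/eqP z0]; first by rewrite normr1.
by rewrite normrM normfV normr_id divff // normr_eq0.
Qed.

Lemma polar_phase (z : C) : `|z| * phase z = z.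
Proof.
rewrite /phase; case: eqP => [->|/eqP z0]; first by rewrite normr0 mul0r.
by rewrite mulrC divfK // normr_eq0.
Qed.

Lemma impose_fixE phi Phi Psi : onbasis phi ->
  impose phi Phi Psi = Psi <->
  forall k, `|inner (phi k) Phi| = `|inner (phi k) Psi|.
Proof.
move=> hphi; split=> [fixPsi k | mod_eq].
  have := congr1 (inner (phi k)) fixPsi.
  rewrite /impose inner_onbasis_sum // => <-.
  by rewrite normrM norm_phase mulr1 normr_id.
rewrite [RHS](onbasis_expand hphi) /impose; apply: eq_bigr => k _.
by rewrite mod_eq polar_phase.
Qed.

Lemma eigen_moduli_ray phi l Psi : onbasis phi ->
  (forall k, `|inner (phi k) (phi l)| = `|inner (phi k) Psi|) ->
  same_ray (phi l) Psi.
Proof.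
move=> hphi mod_eq; exists (inner (phi l) Psi); split.
  by rewrite -mod_eq hphi eqxx normr1.
rewrite [LHS](onbasis_expand hphi) (bigD1 l) //= big1 ?addr0 // => k kl.
have /esym/eqP := mod_eq k; rewrite hphi (negbTE kl) normr0 normr_eq0.
by move/eqP->; rewrite scale0r.
Qed.

Lemma unit_vec_dim_gt0 v : unit_vec v -> (0 < d)%N.
Proof.
rewrite lt0n; apply: contraPneq => d0; rewrite /unit_vec /inner big1.
  by move/esym/eqP; rewrite oner_eq0.
by move=> i; exfalso; case: i => i; rewrite d0.
Qed.

End ImpositionOperator.

Section Rays.
Variable C : numClosedFieldType.
Variable d : nat.
Implicit Types (x y z : 'cV[C]_d) (S : 'cV[C]_d -> Prop).

Lemma same_ray_refl x : same_ray x x.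
Proof. by exists 1; rewrite normr1 scale1r. Qed.

Lemma same_ray_common x y z : same_ray x y -> same_ray x z -> same_ray y z.
Proof.
move=> [a [na ->]] [b [nb ->]].
have a0 : a != 0 by rewrite -normr_eq0 na oner_eq0.
exists (b / a); split; first by rewrite normrM normfV na nb divr1.
by rewrite scalerA divfK.
Qed.

Definition one_ray S : Prop := forall x y, S x -> S y -> same_ray x y.

Lemma one_ray_same_num_rays (S1 S2 : 'cV[C]_d -> Prop) x1 x2 :
  one_ray S1 -> one_ray S2 -> S1 x1 -> S2 x2 -> same_num_rays S1 S2.
Proof.
move=> ray1 ray2 S1x1 S2x2; exists (fun=> x2); split; [|split].
- by [].
- by move=> x y S1x S1y; split=> _; [exact: same_ray_refl | exact: ray1].
- by move=> y S2y; exists x1; split; last exact: ray2.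
Qed.

Lemma same_num_rays_one_ray (S1 S2 : 'cV[C]_d -> Prop) :
  same_num_rays S1 S2 -> one_ray S2 -> one_ray S1.
Proof.
move=> [f [f_in [f_ray _]]] ray2 x y S1x S1y.
by apply/(f_ray _ _ S1x S1y); apply: ray2; apply: f_in.
Qed.

End Rays.

Section PhysicalFixedPoints.
Variable C : numClosedFieldType.
Variables d m : nat.
Variable A : 'I_m -> 'I_d -> 'cV[C]_d.
Hypothesis A_onbasis : forall j, onbasis (A j).

Lemma GammaE Phi Psi : Gamma A Phi Psi <->
  unit_vec Psi /\
  forall j k, `|inner (A j k) Phi| = `|inner (A j k) Psi|.
Proof.
split=> [[uPsi fixPsi] | [uPsi mod_eq]]; split=> // j.
  by apply/impose_fixE.
by apply/impose_fixE => // k; apply: mod_eq.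
Qed.

Lemma Gamma_self Phi : unit_vec Phi -> Gamma A Phi Phi.
Proof. by move=> uPhi; apply/GammaE. Qed.

Lemma info_completeE :
  info_complete A <-> forall Phi, unit_vec Phi -> one_ray (Gamma A Phi).
Proof.
split=> [IC Phi uPhi x y /GammaE[ux mod_x] /GammaE[uy mod_y] | rays].
  by apply: IC => // j k; rewrite -mod_x -mod_y.
move=> Phi Psi uPhi uPsi mod_eq.
by apply: (rays Phi) => //; [apply: Gamma_self | apply/GammaE].
Qed.

Lemma Gamma_eigen_one_ray j l : one_ray (Gamma A (A j l)).
Proof.
have ray_of x : Gamma A (A j l) x -> same_ray (A j l) x.
  by move=> /GammaE[_ mod_eq]; apply: eigen_moduli_ray (mod_eq j).
by move=> x y /ray_of rx /ray_of ry; apply: same_ray_common rx ry.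
Qed.

End PhysicalFixedPoints.

Theorem mainTheorem11 (C : numClosedFieldType) (d m : nat)
    (A : 'I_m -> 'I_d -> 'cV[C]_d) :
  (0 < m)%N -> (forall j : 'I_m, onbasis (A j)) ->
  (info_complete A <-> no_bifurcation A).
Proof.
move=> m_gt0 A_onbasis; apply: iff_trans (info_completeE A_onbasis) _; split.
- move=> rays Phi Phi' uPhi uPhi'.
  by apply: one_ray_same_num_rays (rays _ uPhi) (rays _ uPhi') _ _;
    apply: Gamma_self.
- move=> NB Phi uPhi.
  pose j0 : 'I_m := Ordinal m_gt0.
  pose e := A j0 (Ordinal (unit_vec_dim_gt0 uPhi)).
  have ue : unit_vec e by rewrite /unit_vec A_onbasis eqxx.
  apply: same_num_rays_one_ray (NB _ _ uPhi ue) _.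
  exact: Gamma_eigen_one_ray.
Qed.
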